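(* Let $\mathbb{K}$ be a field, $A\in\mathbb{K}[x]^{m\times n}$, and $J=\{j_1<\dots<j_k\}\subseteq\{1,\dots,n\}$. Let $\phi_J:\{1,\dots,k\}\to\{1,\dots,n\}$ be given by $\phi_J(i)=j_i$, applied entrywise to tuples, and let $A_{*,J}$ be the submatrix of $A$ formed by the columns with indices in $J$. Then, viewing pivot supports as sets, $\rho(A)\cap J\subseteq\phi_J(\rho(A_{*,J}))$, and equality holds whenever $\rho(A)\subseteq J$.
   Context: For a row vector $p=[p_1,\dots,p_n]$, $\deg(p)=\max_j\deg(p_j)$; the pivot index of a nonzero $p$ is the largest $j$ with $\deg(p_j)=\deg(p)$, and $p_j$ is its pivot entry. A matrix $P\in\mathbb{K}[x]^{k\times n}$ is in Popov form if it has no zero row, the pivot indices of its rows are strictly increasing, its pivot entries are monic, and in each column containing a pivot entry all other entries have degree strictly less than that pivot entry. The Popov form of a matrix $M$ of rank $r$ is the unique matrix in $\mathbb{K}[x]^{r\times n}$ in Popov form whose rows generate the same $\mathbb{K}[x]$-module as the rows of $M$. The pivot support $\rho(M)$ of $M$ is the tuple of pivot indices of the rows of its Popov form (the empty tuple if $M$ has rank $0$). *)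

From HB Require Import structures.
From mathcomp Require Import all_boot all_order all_algebra.
From mathcomp Require Import fraction.
From Stdlib Require Import ClassicalEpsilon.
Set Implicit Arguments. Unset Strict Implicit. Unset Printing Implicit Defensive.
Import Order.TTheory GRing.Theory Num.Theory.
Local Open Scope ring_scope.

Section PopovDefs.
Variable K : fieldType.

(* Degrees are encoded through [size] (size p = deg p + 1, size 0 = 0,
   i.e. deg 0 = -oo), so comparisons of degrees are comparisons of sizes. *)

Definition rsize n (v : 'rV[{poly K}]_n) : nat := (\max_(j < n) size (v ord0 j))%N.

Definition is_pivot_index n (v : 'rV[{poly K}]_n) (j : 'I_n) : bool :=
  (size (v ord0 j) == rsize v) &&
  [forall j' : 'I_n, (j < j')%N ==> (size (v ord0 j') < rsize v)%N].

Definition pivot_index n (v : 'rV[{poly K}]_n) : option 'I_n :=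
  [pick j | is_pivot_index v j].

Definition popov k n (P : 'M[{poly K}]_(k, n)) : Prop :=
  exists pv : 'I_k -> 'I_n,
  [/\ forall i, row i P != 0,
      forall i, is_pivot_index (row i P) (pv i),
      forall i i' : 'I_k, (i < i')%N -> (pv i < pv i')%N,
      forall i, P i (pv i) \is monic
    & forall i i' : 'I_k, i' != i -> (size (P i' (pv i)) < size (P i (pv i)))%N].

Definition in_rowmod m n (M : 'M[{poly K}]_(m, n)) (v : 'rV[{poly K}]_n) : Prop :=
  exists c : 'rV[{poly K}]_m, v = c *m M.

Definition prank m n (M : 'M[{poly K}]_(m, n)) : nat :=
  \rank (map_mx (@tofrac _) M).

Definition popov_form_of m n (M : 'M[{poly K}]_(m, n)) r (P : 'M[{poly K}]_(r, n)) : Prop :=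
  [/\ r = prank M, popov P
    & forall v, in_rowmod M v <-> in_rowmod P v].

Definition pivots k n (P : 'M[{poly K}]_(k, n)) : seq 'I_n :=
  pmap (fun i => pivot_index (row i P)) (enum 'I_k).

(* pivot support rho(M): pivot indices of the rows of the Popov form of M
   (the Popov form exists and is unique; the fallback branch is never used) *)
Definition pivot_support m n (M : 'M[{poly K}]_(m, n)) : seq 'I_n :=
  match excluded_middle_informative
          (exists rP : {r : nat & 'M[{poly K}]_(r, n)},
              popov_form_of M (projT2 rP)) with
  | left H => pivots (projT2 (proj1_sig (constructive_indefinite_description _ H)))
  | right _ => [::]
  end.

(* phi_J : 'I_#|J| -> 'I_n, i |-> j_i, the i-th smallest element of J *)
Definition phiJ n (J : {set 'I_n}) (i : 'I_#|J|) : 'I_n := enum_val i.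

Definition colsJ m n (A : 'M[{poly K}]_(m, n)) (J : {set 'I_n}) : 'M[{poly K}]_(m, #|J|) :=
  colsub (@phiJ n J) A.

End PopovDefs.

From HB Require Import structures.
From mathcomp Require Import all_boot all_order all_algebra.
From mathcomp Require Import fraction generic_quotient zify.
From Stdlib Require Import ClassicalEpsilon Classical.
Set Implicit Arguments. Unset Strict Implicit. Unset Printing Implicit Defensive.
Import Order.TTheory GRing.Theory Num.Theory.
Local Open Scope ring_scope.
Local Open Scope quotient_scope.

(* Say that j is attained by M when the row module of M contains a nonzero
   vector with pivot index j; then rho(M) is exactly the set of attained
   indices. Rows of a Popov form P of M are such vectors, and conversely the
   predictable-pivot property of P says that the pivot of c P (c <> 0) is the
   pivot of the row P_i maximizing deg c_i + deg P_i, ties being broken by the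
   pivot index. This needs Popov forms to exist: for each attained j, a monic
   vector with pivot j of least pivot degree, whose other attained entries are
   reduced below the corresponding least degrees, gives one row; the rows
   generate the module by descent on (degree, pivot index) and are
   independent over K(x) by the predictable-pivot property.
   Since phi_J is increasing, restricting a vector to the columns J keeps a
   pivot lying in J, and the row module of A_{*,J} is the restriction of that
   of A; this gives the inclusion. If rho(A) is contained in J, every nonzero
   vector of the module of A has its pivot in J, which gives equality. *)

Lemma ex_minimal_nat (P : nat -> Prop) :
  (exists n, P n) -> exists n, P n /\ forall k, P k -> (n <= k)%N.
Proof.
move=> [n Pn]; apply: NNPP => no_min.
elim/ltn_ind: n Pn => n IH Pn; apply: no_min; exists n; split => // k Pk.
by rewrite leqNgt; apply/negP => /IH; apply.
Qed.

Lemma lex_arg_max (I : finType) (C : pred I) (E G : I -> nat) i0 : C i0 ->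
  exists2 i, C i & forall i', C i' -> (E i' < E i)%N \/ (E i' = E i /\ (G i' <= G i)%N).
Proof.
move=> Ci0; have [i1 Ci1 E_i1] := arg_maxnP E Ci0.
have Ci1E : C i1 && (E i1 == E i1) by rewrite Ci1 eqxx.
have [i /andP[Ci /eqP E_i] G_i] := @arg_maxnP _ i1 (fun i => C i && (E i == E i1)) G Ci1E.
exists i => // i' Ci'; rewrite E_i.
have [lt_E | ge_E] := ltnP (E i') (E i1); first by left.
have eq_E : E i' = E i1 by apply/eqP; rewrite eqn_leq ge_E andbT; exact: E_i1.
by right; split => //; apply: G_i; rewrite Ci' eq_E eqxx.
Qed.

Lemma enum_val_ltn n (A : {set 'I_n}) (i i' : 'I_#|A|) :
  (i < i')%N -> (enum_val i < enum_val i')%N.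
Proof.
move=> lt_ii'; pose ltI := fun x y : 'I_n => (x < y)%N.
have ltI_trans : transitive ltI by move=> ? ? ?; apply: ltn_trans.
have A_sorted : sorted ltI (enum A).
  rewrite /enum_mem -enumT; apply: sorted_filter => //.
  by have := iota_ltn_sorted 0 n; rewrite -val_enum_ord sorted_map.
have lt_size k : (k < #|A|)%N -> (k < size (enum A))%N by rewrite cardE.
rewrite /enum_val (set_nth_default (enum_default i') _ (lt_size _ (ltn_ord i))).
exact: (sorted_ltn_nth ltI_trans) (lt_size _ (ltn_ord i)) (lt_size _ (ltn_ord i')) lt_ii'.
Qed.

Lemma tofrac_numden (R : idomainType) (x : {fraction R}) :
  exists a b : R, b != 0 /\ x * tofrac b = tofrac a.
Proof.
elim/quotW: x => r; exists r.1, r.2; split; first exact: denom_ratioP.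
have tofracE (a : R) : tofrac a = \pi_({fraction R}) (Ratio a 1) by rewrite /tofrac; unlock.
rewrite !tofracE -[_ * _]/(FracField.mul _ _) -FracField.pi_mul.
apply/eqmodP; rewrite /= FracField.equivfE /FracField.mulf.
rewrite !numden_Ratio ?oner_neq0 ?mulf_neq0 ?denom_ratioP ?oner_neq0 //.
by rewrite !mulr1 mulrC.
Qed.

Lemma row_clear_denominators (R : idomainType) k (u : 'rV[{fraction R}]_k) :
  exists (d : R) (c : 'rV[R]_k), d != 0 /\ map_mx (@tofrac R) c = tofrac d *: u.
Proof.
have /all_sig[ab abP] : forall i : 'I_k,
    {ab : R * R | ab.2 != 0 /\ u ord0 i * tofrac ab.2 = tofrac ab.1}.
  move=> i; apply: constructive_indefinite_description.
  by have [a [b abE]] := tofrac_numden (u ord0 i); exists (a, b).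
exists (\prod_i (ab i).2), (\row_i ((ab i).1 * \prod_(l | l != i) (ab l).2)); split.
  by apply/prodf_neq0 => i _; case: (abP i).
apply/rowP => i; rewrite !mxE [\prod_l _](bigD1 i) //= !tofracM.
by case: (abP i) => _ <-; rewrite [RHS]mulrC mulrA.
Qed.

Section Pivots.
Variable K : fieldType.
Local Notation poly := {poly K}.

Lemma size_le_rsize n (v : 'rV[poly]_n) j : (size (v ord0 j) <= rsize v)%N.
Proof. exact: (leq_bigmax (F := fun j => size (v ord0 j))). Qed.

Lemma rsize_le n (v : 'rV[poly]_n) N :
  (forall j, size (v ord0 j) <= N)%N -> (rsize v <= N)%N.
Proof. by move=> H; apply/bigmax_leqP => j _; exact: H. Qed.

Lemma rsize_eq0 n (v : 'rV[poly]_n) : (rsize v == 0%N) = (v == 0).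
Proof.
apply/idP/eqP => [/eqP v0 | ->].
  apply/rowP => j; rewrite mxE; apply/eqP.
  by rewrite -size_poly_eq0 -leqn0 -[X in (_ <= X)%N]v0 (leq_trans (size_le_rsize v j)).
by rewrite -leqn0; apply: rsize_le => j; rewrite mxE size_poly0.
Qed.

Lemma is_pivotP n (v : 'rV[poly]_n) j : is_pivot_index v j ->
  size (v ord0 j) = rsize v /\
  forall j' : 'I_n, (j < j')%N -> (size (v ord0 j') < rsize v)%N.
Proof.
by case/andP => /eqP vjE /forallP vj_lt; split => // j' lt_jj'; exact: (implyP (vj_lt j')).
Qed.

Lemma is_pivot_intro n (v : 'rV[poly]_n) j d :
  size (v ord0 j) = d -> (forall j', size (v ord0 j') <= d)%N ->
  (forall j' : 'I_n, (j < j')%N -> size (v ord0 j') < d)%N ->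
  is_pivot_index v j /\ rsize v = d.
Proof.
move=> vj le_d lt_d.
have rsize_d : rsize v = d.
  by apply/eqP; rewrite eqn_leq rsize_le //= -vj size_le_rsize.
split=> //; apply/andP; split; first by rewrite vj rsize_d.
by apply/forallP => j'; apply/implyP => hj; rewrite rsize_d lt_d.
Qed.

Lemma is_pivot_uniq n (v : 'rV[poly]_n) j1 j2 :
  is_pivot_index v j1 -> is_pivot_index v j2 -> j1 = j2.
Proof.
move=> /is_pivotP[vj1E vj1_lt] /is_pivotP[vj2E vj2_lt].
apply/val_inj; case: (ltngtP j1 j2) => // [/vj1_lt | /vj2_lt].
  by rewrite vj2E ltnn.
by rewrite vj1E ltnn.
Qed.

Lemma pivot_indexE n (v : 'rV[poly]_n) j :
  is_pivot_index v j -> pivot_index v = Some j.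
Proof.
move=> vj; rewrite /pivot_index; case: pickP => [j' vj'|v_no]; last by rewrite v_no in vj.
by rewrite (is_pivot_uniq vj' vj).
Qed.

Lemma is_pivot_exists n (v : 'rV[poly]_n) : v != 0 -> exists j, is_pivot_index v j.
Proof.
move=> v_neq0.
have n_gt0 : (0 < #|'I_n|)%N.
  by case: n v v_neq0 => [|n] v; [rewrite (thinmx0 v) eqxx | rewrite card_ord].
have [jm rsizeE] : {jm | rsize v = size (v ord0 jm)} by exact: bigop.eq_bigmax.
have top_jm : size (v ord0 jm) == rsize v by rewrite rsizeE.
have [j /eqP top_j j_max] := @arg_maxnP _ jm (fun j => size (v ord0 j) == rsize v) val top_jm.
exists j; apply: (proj1 (is_pivot_intro top_j _ _)) => [j'|j' lt_jj'].
  exact: size_le_rsize.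
rewrite ltn_neqAle size_le_rsize andbT.
by apply: contraTN lt_jj' => /j_max; rewrite -leqNgt.
Qed.

Lemma monic_pivot_neq0 n (v : 'rV[poly]_n) j : v ord0 j \is monic -> v != 0.
Proof. by move=> /monic_neq0; apply: contraNneq => ->; rewrite mxE. Qed.

Lemma is_pivot_monic_scale n (v : 'rV[poly]_n) j :
  is_pivot_index v j -> v != 0 ->
  is_pivot_index ((lead_coef (v ord0 j))^-1%:P *: v) j /\
  ((lead_coef (v ord0 j))^-1%:P *: v) ord0 j \is monic.
Proof.
move=> vj v_neq0; set v' := _ *: v; have [vjE vj_lt] := is_pivotP vj.
have lc_neq0 : lead_coef (v ord0 j) != 0.
  by rewrite lead_coef_eq0 -size_poly_eq0 vjE rsize_eq0.
have size_v' j' : size (v' ord0 j') = size (v ord0 j').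
  by rewrite mxE mul_polyC size_scale // invr_eq0.
split; last by rewrite mxE mul_polyC monicE lead_coefZ mulVf.
apply: (proj1 (is_pivot_intro (d := rsize v) _ _ _)) => [|j'|j' ?];
  by rewrite size_v' ?vjE ?size_le_rsize ?vj_lt.
Qed.

Lemma size_sum_leq (I : finType) (P : pred I) (F : I -> poly) d :
  (forall i, P i -> size (F i) <= d)%N -> (size (\sum_(i | P i) F i)%R <= d)%N.
Proof. by move=> le_d; apply: leq_trans (size_sum _ _ _) _; apply/bigmax_leqP. Qed.

Lemma size_sum_ltn (I : finType) (P : pred I) (F : I -> poly) d : (0 < d)%N ->
  (forall i, P i -> size (F i) < d)%N -> (size (\sum_(i | P i) F i)%R < d)%N.
Proof.
move=> d_gt0 lt_d; rewrite -(prednK d_gt0) ltnS; apply: size_sum_leq => i Pi.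
by rewrite -ltnS prednK // lt_d.
Qed.

End Pivots.

Section RowModule.
Variables (K : fieldType) (m n : nat) (M : 'M[{poly K}]_(m, n)).

Lemma in_rowmod0 : in_rowmod M 0.
Proof. by exists 0; rewrite mul0mx. Qed.

Lemma in_rowmodD u v : in_rowmod M u -> in_rowmod M v -> in_rowmod M (u + v).
Proof. by move=> [c1 ->] [c2 ->]; exists (c1 + c2); rewrite mulmxDl. Qed.

Lemma in_rowmodZ (t : {poly K}) v : in_rowmod M v -> in_rowmod M (t *: v).
Proof. by move=> [c ->]; exists (t *: c); rewrite scalemxAl. Qed.

Lemma in_rowmodB u v : in_rowmod M u -> in_rowmod M v -> in_rowmod M (u - v).
Proof. by move=> Mu Mv; rewrite -scaleN1r; apply/in_rowmodD/in_rowmodZ. Qed.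

Lemma in_rowmod_row i : in_rowmod M (row i M).
Proof. by exists (delta_mx 0 i); rewrite rowE. Qed.

Lemma in_rowmod_sub k (P : 'M[{poly K}]_(k, n)) :
  (forall i, in_rowmod M (row i P)) -> forall v, in_rowmod P v -> in_rowmod M v.
Proof.
move=> MP v [c ->]; rewrite mulmx_sum_row.
apply: (big_ind (in_rowmod M)) => [|u w|i _]; first exact: in_rowmod0.
  exact: in_rowmodD.
exact: in_rowmodZ.
Qed.

End RowModule.

Section PredictablePivot.
Variables (K : fieldType) (k n : nat) (P : 'M[{poly K}]_(k, n)) (pv : 'I_k -> 'I_n).
Hypotheses (pv_inj : injective pv) (P_neq0 : forall i, row i P != 0)
           (P_pivot : forall i, is_pivot_index (row i P) (pv i)).

Lemma predictable_pivot (c : 'rV[{poly K}]_k) :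
  c != 0 -> c *m P != 0 /\ exists i, is_pivot_index (c *m P) (pv i).
Proof.
move=> c_neq0.
have /existsP[i0 ci0] : [exists i, c ord0 i != 0].
  apply: contraNT c_neq0 => /existsPn c_0.
  by apply/eqP/rowP => i; rewrite mxE; apply/eqP; exact: negbNE (c_0 i).
pose E i := (size (c ord0 i) + rsize (row i P))%N.
have [ist cist ist_max] := @lex_arg_max _ (fun i => c ord0 i != 0) E (fun i => val (pv i)) i0 ci0.
have size_c_gt0 i : c ord0 i != 0 -> (0 < size (c ord0 i))%N by rewrite lt0n size_poly_eq0.
have rsize_gt0 i : (0 < rsize (row i P))%N by rewrite lt0n rsize_eq0.
pose F := (E ist).-1.
have F_gt0 : (0 < F)%N by have := size_c_gt0 _ cist; have := rsize_gt0 ist; rewrite /F /E; lia.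
have term_size i (j : 'I_n) : (size (c ord0 i * P i j)%R <= F)%N /\
    ((pv ist < j)%N || ((j == pv ist) && (i != ist)) -> (size (c ord0 i * P i j)%R < F)%N).
  have [-> | ci] := eqVneq (c ord0 i) 0; first by rewrite mul0r size_poly0.
  have cPij_le := size_polyMleq (c ord0 i) (P i j).
  have Pij_le := size_le_rsize (row i P) j; rewrite mxE in Pij_le.
  have Pij_lt : (pv i < j)%N -> (size (P i j) < rsize (row i P))%N.
    by have [_ Pi_lt] := is_pivotP (P_pivot i); move/Pi_lt; rewrite mxE.
  have ci_gt0 := size_c_gt0 _ ci; rewrite /F.
  have [E_lt | [E_eq pv_le]] := ist_max i ci; first by rewrite /E in E_lt *; split; lia.
  rewrite -E_eq /E; split => [|j_after]; first lia.
  suff /Pij_lt : (pv i < j)%N by lia.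
  case/orP: j_after => [/(leq_ltn_trans pv_le) //| /andP[/eqP-> i_ist]].
  by rewrite ltn_neqAle pv_le andbT; apply: contra i_ist => /eqP/val_inj/pv_inj ->.
have top_size : size (c ord0 ist * P ist (pv ist))%R = F.
  have [P_top _] := is_pivotP (P_pivot ist); rewrite mxE in P_top.
  by rewrite size_mul -?size_poly_eq0 ?P_top -?lt0n ?size_c_gt0.
have cPE j : (c *m P) ord0 j = \sum_i c ord0 i * P i j by rewrite mxE.
have [pivot_ist rsize_cP] : is_pivot_index (c *m P) (pv ist) /\ rsize (c *m P) = F.
  apply: is_pivot_intro => [|j|j lt_j]; rewrite cPE.
  - rewrite (bigD1 ist) //= size_polyDl top_size // size_sum_ltn // => i i_ist.
    by apply: (proj2 (term_size i _)); rewrite eqxx i_ist orbT.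
  - by apply: size_sum_leq => i _; exact: (proj1 (term_size i j)).
  - by apply: size_sum_ltn => // i _; apply: (proj2 (term_size i j)); rewrite lt_j.
split; last by exists ist.
by rewrite -rsize_eq0 rsize_cP -lt0n.
Qed.

Lemma row_free_distinct_pivots : row_free (map_mx (@tofrac _) P).
Proof.
rewrite -kermx_eq0; apply/eqP/row_matrixP => i.
rewrite row0; set u := row i _; apply: contraTeq isT => u_neq0.
have [d [c [d_neq0 cE]]] := row_clear_denominators u.
have cP0 : c *m P = 0.
  have : map_mx (@tofrac _) (c *m P) = 0.
    by rewrite map_mxM cE -scalemxAl -row_mul mulmx_ker row0 scaler0.
  move/rowP => cP0; apply/rowP => j; move: (cP0 j); rewrite !mxE => /eqP.
  by rewrite tofrac_eq0 => /eqP.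
have c_neq0 : c != 0.
  apply: contra_neq u_neq0 => c0; apply/eqP; move: cE.
  by rewrite c0 map_mx0 => /esym/eqP; rewrite scaler_eq0 tofrac_eq0 (negbTE d_neq0).
have [cP_neq0 _] := predictable_pivot c_neq0.
by rewrite cP0 eqxx in cP_neq0.
Qed.

End PredictablePivot.

Section AttainedPivots.
Variables (K : fieldType) (m n : nat) (M : 'M[{poly K}]_(m, n)).

Definition monic_pivot_in j (p : 'rV[{poly K}]_n) :=
  [/\ in_rowmod M p, is_pivot_index p j & p ord0 j \is monic].

Definition pivot_attained j := exists p, monic_pivot_in j p.

Lemma pivot_attained_of v j :
  in_rowmod M v -> v != 0 -> is_pivot_index v j -> pivot_attained j.
Proof.
move=> Mv v_neq0 vj; have [vj' monic_j] := is_pivot_monic_scale vj v_neq0.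
by exists ((lead_coef (v ord0 j))^-1%:P *: v); split => //; exact: in_rowmodZ.
Qed.

Lemma mem_pivots_popov_form r (P : 'M[{poly K}]_(r, n)) j :
  popov_form_of M P -> j \in pivots P <-> pivot_attained j.
Proof.
case=> _ [pv [P_neq0 P_pivot pv_lt P_monic _]] MP.
have pv_inj : injective pv.
  by move=> i i' eq_pv; apply/val_inj/eqP; case: ltngtP => // /pv_lt; rewrite eq_pv ltnn.
have -> : (j \in pivots P) <-> exists i, pv i = j.
  rewrite /pivots mem_pmap; split => [/mapP[i _]|[i <-]].
    by rewrite (pivot_indexE (P_pivot i)) => -[->]; exists i.
  by apply/mapP; exists i; rewrite ?mem_enum // (pivot_indexE (P_pivot i)).
split => [[i <-]|[p [Mp pj p_monic]]].
  exists (row i P); split; [exact/MP/in_rowmod_row | exact: P_pivot | by rewrite mxE P_monic].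
have [c p_cP] := (proj1 (MP p)) Mp.
have c_neq0 : c != 0 by apply: contraNneq (monic_pivot_neq0 p_monic) => c0; rewrite p_cP c0 mul0mx.
have [_ [i ci]] := predictable_pivot pv_inj P_neq0 P_pivot c_neq0.
by exists i; rewrite -p_cP in ci; exact: is_pivot_uniq ci pj.
Qed.

End AttainedPivots.

Section Reduction.
Variables (K : fieldType) (n : nat).
Implicit Types v g p q : 'rV[{poly K}]_n.

Lemma reduce_by_pivot v g (j : 'I_n) :
  is_pivot_index g j -> g ord0 j != 0 -> (size (g ord0 j) <= size (v ord0 j))%N ->
  let t : {poly K} := v ord0 j %/ g ord0 j in
  [/\ forall j', (size ((t *: g) ord0 j') <= size (v ord0 j))%N,
      forall j' : 'I_n, (j < j')%N -> (size ((t *: g) ord0 j') < size (v ord0 j))%N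
    & (size ((v - t *: g)%R ord0 j) < size (g ord0 j))%N].
Proof.
move=> gj gj_neq0 le_gv t; have [gjE gj_lt] := is_pivotP gj.
have gj_gt0 : (0 < size (g ord0 j))%N by rewrite lt0n size_poly_eq0.
have size_t : size t = (size (v ord0 j) - (size (g ord0 j)).-1)%N by rewrite size_divp.
have tgE j' : (t *: g) ord0 j' = t * g ord0 j' by rewrite mxE.
split => [j'|j' lt_jj'|].
- rewrite tgE; apply: leq_trans (size_polyMleq t (g ord0 j')) _.
  by have := size_le_rsize g j'; rewrite -gjE size_t; lia.
- rewrite tgE; apply: leq_ltn_trans (size_polyMleq t (g ord0 j')) _.
  by have := gj_lt j' lt_jj'; rewrite -gjE size_t; lia.
- by rewrite !mxE {1}(divp_eq (v ord0 j) (g ord0 j)) addrAC subrr add0r ltn_modp.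
Qed.

Lemma reduce_pivot_weight v g (j j' : 'I_n) :
  is_pivot_index v j -> is_pivot_index g j -> g ord0 j != 0 ->
  (size (g ord0 j) <= size (v ord0 j))%N ->
  let w := v - (v ord0 j %/ g ord0 j) *: g in
  is_pivot_index w j' -> (rsize w * n + j' < rsize v * n + j)%N.
Proof.
move=> vj gj gj_neq0 le_gv w wj'.
have [tg_le tg_lt w_j] := reduce_by_pivot gj gj_neq0 le_gv.
have [vjE vj_lt] := is_pivotP vj; have [wj'E _] := is_pivotP wj'.
have wE j1 : w ord0 j1 = v ord0 j1 - ((v ord0 j %/ g ord0 j) *: g) ord0 j1 by rewrite !mxE.
have w_le j1 : (size (w ord0 j1) <= rsize v)%N.
  rewrite wE; apply: leq_trans (size_polyD _ _) _.
  by rewrite size_polyN geq_max size_le_rsize -vjE tg_le.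
have w_lt (j1 : 'I_n) : (j <= j1)%N -> (size (w ord0 j1) < rsize v)%N.
  rewrite leq_eqVlt => /orP[/eqP/val_inj <- | lt_jj1].
    by apply: leq_trans w_j _; rewrite -vjE.
  rewrite wE; apply: leq_ltn_trans (size_polyD _ _) _.
  by rewrite size_polyN gtn_max vj_lt // -vjE tg_lt.
have [lt_wv | gt_wv | eq_wv] := ltngtP (rsize w) (rsize v).
- by have := ltn_ord j'; nia.
- by rewrite ltnNge rsize_le in gt_wv.
rewrite eq_wv ltn_add2l ltnNge; apply: contraTN isT => /w_lt.
by rewrite wj'E eq_wv ltnn.
Qed.

Lemma sub_small_pivot p q (j : 'I_n) d :
  is_pivot_index p j -> size (p ord0 j) = d ->
  (forall j', size (q ord0 j') <= d)%N ->
  (forall j' : 'I_n, (j <= j')%N -> size (q ord0 j') < d)%N ->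
  [/\ is_pivot_index (p - q) j, size ((p - q) ord0 j) = d
    & lead_coef ((p - q) ord0 j) = lead_coef (p ord0 j)].
Proof.
move=> pj pjE q_le q_lt; have [pjE' pj_lt] := is_pivotP pj.
pose w : 'rV[{poly K}]_n := p - q.
have wE j' : w ord0 j' = p ord0 j' - q ord0 j' by rewrite !mxE.
have w_j : size (w ord0 j) = d by rewrite wE size_polyDl // size_polyN pjE q_lt.
have w_le j' : (size (w ord0 j') <= d)%N.
  rewrite wE; apply: leq_trans (size_polyD _ _) _.
  by rewrite size_polyN geq_max q_le -pjE pjE' size_le_rsize.
have w_lt (j' : 'I_n) : (j < j')%N -> (size (w ord0 j') < d)%N.
  move=> lt_jj'; rewrite wE; apply: leq_ltn_trans (size_polyD _ _) _.
  by rewrite size_polyN gtn_max q_lt ?(ltnW lt_jj') // -pjE pjE' pj_lt.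
have [wj _] := is_pivot_intro w_j w_le w_lt.
by split => //; rewrite -/w wE lead_coefDl // size_polyN pjE q_lt.
Qed.

End Reduction.

Section PopovExistence.
Variables (K : fieldType) (m n : nat) (M : 'M[{poly K}]_(m, n)).
Local Notation attained := (pivot_attained M).
Local Notation candidate := (monic_pivot_in M).

Definition is_min_pivot_size j d :=
  (exists p, candidate j p /\ size (p ord0 j) = d) /\
  forall q, candidate j q -> (d <= size (q ord0 j))%N.

Definition min_pivot_size j : nat := epsilon (inhabits 0%N) (is_min_pivot_size j).

Local Notation delta := min_pivot_size.

Lemma min_pivot_sizeP j : attained j -> is_min_pivot_size j (delta j).
Proof.
move=> [p p_j]; apply: epsilon_spec.
have [d [[q [q_j <-]] d_min]] : exists d, (exists q, candidate j q /\ size (q ord0 j) = d) /\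
    forall d', (exists q, candidate j q /\ size (q ord0 j) = d') -> (d <= d')%N.
  by apply: ex_minimal_nat; exists (size (p ord0 j)), p.
by exists (size (q ord0 j)); split; [exists q | move=> q' q'_j; apply: d_min; exists q'].
Qed.

Lemma min_pivot_size_le v j :
  in_rowmod M v -> v != 0 -> is_pivot_index v j -> (delta j <= size (v ord0 j))%N.
Proof.
move=> Mv v_neq0 vj; have [v'j v'_monic] := is_pivot_monic_scale vj v_neq0.
have [_ min_le] := min_pivot_sizeP (pivot_attained_of Mv v_neq0 vj).
apply: leq_trans (min_le _ (And3 (in_rowmodZ _ Mv) v'j v'_monic)) _.
by rewrite mxE mul_polyC size_scale_leq.
Qed.

Definition excess_entry j (p : 'rV[{poly K}]_n) j' :=
  [/\ j' != j, attained j' & (delta j' <= size (p ord0 j'))%N].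

Definition reduced_row_for j (p : 'rV[{poly K}]_n) :=
  [/\ candidate j p, size (p ord0 j) = delta j
    & forall j', j' != j -> attained j' -> (size (p ord0 j') < delta j')%N].

(* Excess entries are eliminated in decreasing order of (degree, index). *)
Local Notation weight p j' := (size (p ord0 j') * n + j')%N.

Lemma weight_lt_size (a b : nat) (j1 j2 : 'I_n) : (a < b)%N -> (a * n + j1 < b * n + j2)%N.
Proof. by move=> lt_ab; have := ltn_ord j1; nia. Qed.

Lemma weight_lt_index (a b : nat) (j1 j2 : 'I_n) :
  (a <= b)%N -> (j1 < j2)%N -> (a * n + j1 < b * n + j2)%N.
Proof. by move=> le_ab lt_j12; nia. Qed.

Lemma weight_inj (a b : nat) (j1 j2 : 'I_n) : (a * n + j1 = b * n + j2)%N -> j1 = j2.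
Proof.
by move/(congr1 (modn^~ n)); rewrite !modnMDl !modn_small // => /val_inj.
Qed.

Lemma reduce_excess_entry j p j0 :
  candidate j p -> size (p ord0 j) = delta j -> excess_entry j p j0 ->
  exists p', [/\ candidate j p', size (p' ord0 j) = delta j &
    forall j', excess_entry j p' j' -> (weight p' j' < weight p j0)%N \/
      [/\ excess_entry j p j', weight p' j' = weight p j' & j' != j0]].
Proof.
move=> [Mp pj p_monic] pj_min [j0_j j0_att j0_excess].
have [[g [[Mg gj0 g_monic] g_min]] _] := min_pivot_sizeP j0_att.
have g_le : (size (g ord0 j0) <= size (p ord0 j0))%N by rewrite g_min.
have [tg_le tg_lt pg_j0] := reduce_by_pivot gj0 (monic_neq0 g_monic) g_le.
set q := _ *: g in tg_le tg_lt pg_j0.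
have [pjE pj_lt] := is_pivotP pj.
have s_le : (size (p ord0 j0) <= delta j)%N by rewrite -pj_min pjE size_le_rsize.
have q_lt (j' : 'I_n) : (j <= j')%N -> (size (q ord0 j') < delta j)%N.
  move=> le_jj'; have [/tg_lt lt_q|le_j'j0] := ltnP j0 j'; first exact: leq_trans lt_q s_le.
  have lt_jj0 : (j < j0)%N.
    by rewrite ltn_neqAle (leq_trans le_jj' le_j'j0) andbT; apply: contra j0_j => /eqP/val_inj->.
  by apply: leq_ltn_trans (tg_le j') _; rewrite -pj_min pjE pj_lt.
have [p'j p'j_size p'_lead] :=
  sub_small_pivot pj pj_min (fun j' => leq_trans (tg_le j') s_le) q_lt.
exists (p - q); split => //; first split => //.
- by apply: in_rowmodB Mp _; exact: in_rowmodZ.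
- by rewrite monicE p'_lead -monicE.
move=> j' [j'_j j'_att j'_excess].
have [eq_j'j0 | j'_j0] := eqVneq j' j0.
  by move: j'_excess; rewrite eq_j'j0 -g_min leqNgt pg_j0.
have pqE : (p - q) ord0 j' = p ord0 j' - q ord0 j' by rewrite !mxE.
have [le_pq | lt_qp] := leqP (size ((p - q) ord0 j')) (size (q ord0 j')).
  left; have [lt_j0j' | lt_j'j0 | /val_inj eq_j0j'] := ltngtP j0 j'.
  - exact/weight_lt_size/(leq_ltn_trans le_pq)/tg_lt.
  - exact/weight_lt_index/lt_j'j0/(leq_trans le_pq)/tg_le.
  - by rewrite eq_j0j' eqxx in j'_j0.
have p_j' : size (p ord0 j') = size ((p - q) ord0 j').
  by rewrite -[p ord0 j'](subrK (q ord0 j')) -pqE size_polyDl.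
by right; split; rewrite ?p_j' //; split; rewrite ?p_j'.
Qed.

Lemma reduced_row_exists j : attained j -> exists p, reduced_row_for j p.
Proof.
move=> j_att; have [[p0 [p0_j p0_min]] _] := min_pivot_sizeP j_att.
suff reduce R : forall p, candidate j p -> size (p ord0 j) = delta j ->
    (forall j', excess_entry j p j' -> weight p j' < R)%N -> exists p', reduced_row_for j p'.
  apply: (reduce ((delta j).+1 * n)%N p0) => // j' _.
  case: p0_j => _ /is_pivotP[p0jE _] _; have := size_le_rsize p0 j'.
  by rewrite -p0jE p0_min; have := ltn_ord j'; nia.
elim: R => [|R IH] p p_j p_min p_lt.
  exists p; split => // j' j'_j j'_att; rewrite ltnNge; apply/negP => j'_excess.
  by have := p_lt j' (And3 j'_j j'_att j'_excess).
have below_R j' : excess_entry j p j' -> weight p j' <> R -> (weight p j' < R)%N.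
  by move=> /p_lt; rewrite ltnS leq_eqVlt => /orP[/eqP|].
have [[j0 [j0_excess j0_R]] | no_R] := classic (exists j0, excess_entry j p j0 /\ weight p j0 = R).
  have [p' [p'_j p'_min p'_lt]] := reduce_excess_entry p_j p_min j0_excess.
  apply: IH p'_j p'_min _ => j' /p'_lt[|[j'_excess -> j'_j0]]; first by rewrite j0_R.
  apply: below_R j'_excess _; rewrite -j0_R => /weight_inj eq_j'j0.
  by rewrite eq_j'j0 eqxx in j'_j0.
apply: IH p_j p_min _ => j' j'_excess; apply: (below_R j' j'_excess) => w_R.
by apply: no_R; exists j'; split.
Qed.

End PopovExistence.

Section PopovBasis.
Variables (K : fieldType) (m n : nat) (M : 'M[{poly K}]_(m, n)).
Local Notation attained := (pivot_attained M).

Definition attained_pivots : {set 'I_n} :=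
  [set j | if excluded_middle_informative (attained j) then true else false].

Lemma mem_attained_pivots j : j \in attained_pivots <-> attained j.
Proof. by rewrite inE; case: excluded_middle_informative. Qed.

Definition reduced_row j : 'rV[{poly K}]_n :=
  epsilon (inhabits 0) (reduced_row_for M j).

Lemma reduced_rowP j : j \in attained_pivots -> reduced_row_for M j (reduced_row j).
Proof. by move/mem_attained_pivots/reduced_row_exists; exact: epsilon_spec. Qed.

Definition popov_basis : 'M[{poly K}]_(#|attained_pivots|, n) :=
  \matrix_i reduced_row (enum_val i).

Lemma row_popov_basis i : row i popov_basis = reduced_row (enum_val i).
Proof. exact: rowK. Qed.

Lemma popov_basis_row_neq0 i : row i popov_basis != 0.
Proof.
by rewrite row_popov_basis; have [[_ _ /monic_pivot_neq0]] := reduced_rowP (enum_valP i).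
Qed.

Lemma popov_basis_pivot i : is_pivot_index (row i popov_basis) (enum_val i).
Proof. by rewrite row_popov_basis; have [[]] := reduced_rowP (enum_valP i). Qed.

Lemma popov_basis_popov : popov popov_basis.
Proof.
exists enum_val; split => [i|i|i i'|i|i i' i'_i]; rewrite ?mxE.
- exact: popov_basis_row_neq0.
- exact: popov_basis_pivot.
- exact: enum_val_ltn.
- by have [[]] := reduced_rowP (enum_valP i).
have [_ -> _] := reduced_rowP (enum_valP i).
have [_ _ reduced_i'] := reduced_rowP (enum_valP i').
apply: reduced_i'; first by apply: contra i'_i => /eqP/enum_val_inj ->.
exact/mem_attained_pivots/enum_valP.
Qed.

Lemma popov_basis_sub v : in_rowmod popov_basis v -> in_rowmod M v.
Proof.
by apply: in_rowmod_sub => i; rewrite row_popov_basis; have [[]] := reduced_rowP (enum_valP i).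
Qed.

Lemma sub_popov_basis v : in_rowmod M v -> in_rowmod popov_basis v.
Proof.
suff descend N : forall v, in_rowmod M v ->
    (forall j, is_pivot_index v j -> rsize v * n + j < N)%N -> in_rowmod popov_basis v.
  by move=> Mv; apply: (descend (rsize v * n + n)%N) => // j _; rewrite ltn_add2l.
elim: N => [|N IH] {}v Mv v_lt; have [-> | v_neq0] := eqVneq v 0.
- exact: in_rowmod0.
- by have [j /v_lt] := is_pivot_exists v_neq0.
- exact: in_rowmod0.
have [j vj] := is_pivot_exists v_neq0.
have j_att : j \in attained_pivots by apply/mem_attained_pivots/(pivot_attained_of Mv).
have [[Mg gj g_monic] g_min _] := reduced_rowP j_att.
have g_le : (size (reduced_row j ord0 j) <= size (v ord0 j))%N.
  by rewrite g_min min_pivot_size_le.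
rewrite -(subrK ((v ord0 j %/ reduced_row j ord0 j) *: reduced_row j) v).
apply: in_rowmodD.
  apply: IH; first by apply: in_rowmodB Mv _; exact: in_rowmodZ.
  move=> j' wj'; have := v_lt j vj; rewrite ltnS; apply: leq_trans.
  exact: reduce_pivot_weight vj gj (monic_neq0 g_monic) g_le wj'.
rewrite -(enum_rankK_in j_att j_att) -row_popov_basis.
exact/in_rowmodZ/in_rowmod_row.
Qed.

End PopovBasis.

Section PopovForm.
Variables (K : fieldType) (m n : nat) (M : 'M[{poly K}]_(m, n)).

Lemma popov_basis_rank : #|attained_pivots M| = prank M.
Proof.
have eqM : (map_mx (@tofrac _) M == map_mx (@tofrac _) (popov_basis M))%MS.
  apply/andP; split; apply/row_subP => i; rewrite -map_row.
    by have [c ->] := sub_popov_basis (in_rowmod_row M i); rewrite map_mxM submxMl.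
  by have [c ->] := popov_basis_sub (in_rowmod_row (popov_basis M) i); rewrite map_mxM submxMl.
rewrite /prank (eqmx_rank eqM); apply/esym/eqP.
exact: row_free_distinct_pivots enum_val_inj (@popov_basis_row_neq0 _ _ _ M)
  (@popov_basis_pivot _ _ _ M).
Qed.

Lemma popov_form_exists : exists r (P : 'M[{poly K}]_(r, n)), popov_form_of M P.
Proof.
exists #|attained_pivots M|, (popov_basis M); split.
- exact: popov_basis_rank.
- exact: popov_basis_popov.
- by move=> v; split; [exact: sub_popov_basis | exact: popov_basis_sub].
Qed.

Lemma mem_pivot_support j : j \in pivot_support M <-> pivot_attained M j.
Proof.
rewrite /pivot_support; case: excluded_middle_informative => [P_ex | no_P].
  by case: constructive_indefinite_description => -[r P] /= /mem_pivots_popov_form.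
by case: no_P; have [r [P MP]] := popov_form_exists; exists (existT _ r P).
Qed.

End PopovForm.

Section ColumnSelection.
Variables (K : fieldType) (m n k : nat) (A : 'M[{poly K}]_(m, n)) (f : 'I_k -> 'I_n).
Hypothesis f_mono : forall i i' : 'I_k, (i < i')%N -> (f i < f i')%N.

Lemma in_rowmod_colsub w :
  in_rowmod (colsub f A) w <-> exists2 v, in_rowmod A v & w = colsub f v.
Proof.
have colsubM (c : 'rV_m) : colsub f (c *m A) = c *m colsub f A.
  by apply/rowP => j; rewrite !mxE; apply: eq_bigr => i _; rewrite !mxE.
split => [[c ->] | [v [c ->] ->]]; last by exists c; rewrite colsubM.
by exists (c *m A); [exists c | rewrite colsubM].
Qed.

Lemma is_pivot_colsub (v : 'rV[{poly K}]_n) i :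
  is_pivot_index v (f i) -> is_pivot_index (colsub f v) i.
Proof.
move=> vfi; have [vfiE vfi_lt] := is_pivotP vfi; set u := colsub f v.
have u_i : size (u ord0 i) = rsize v by rewrite mxE.
have u_le j : (size (u ord0 j) <= rsize v)%N by rewrite mxE size_le_rsize.
have u_lt (j : 'I_k) : (i < j)%N -> (size (u ord0 j) < rsize v)%N.
  by move=> lt_ij; rewrite mxE vfi_lt ?f_mono.
exact: (proj1 (is_pivot_intro u_i u_le u_lt)).
Qed.

Lemma pivot_attained_colsub i :
  pivot_attained A (f i) -> pivot_attained (colsub f A) i.
Proof.
case=> p [Ap pfi p_monic]; exists (colsub f p); split.
- by apply/in_rowmod_colsub; exists p.
- exact: is_pivot_colsub.
- by rewrite mxE.
Qed.

Lemma colsub_pivot_attained i :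
  (forall j, pivot_attained A j -> exists i', f i' = j) ->
  pivot_attained (colsub f A) i -> pivot_attained A (f i).
Proof.
move=> attained_f [w [Aw wi w_monic]]; have [v Av wE] := (proj1 (in_rowmod_colsub w)) Aw.
have v_neq0 : v != 0.
  apply: contraNneq (monic_pivot_neq0 w_monic) => v0.
  by rewrite wE v0; apply/eqP/rowP => j; rewrite !mxE.
have [j vj] := is_pivot_exists v_neq0.
have [i' fi'] := attained_f j (pivot_attained_of Av v_neq0 vj).
rewrite -fi' in vj; have wi' : is_pivot_index w i' by rewrite wE is_pivot_colsub.
by rewrite (is_pivot_uniq wi wi'); exact: pivot_attained_of Av v_neq0 vj.
Qed.

End ColumnSelection.

Theorem lemma4p4 (K : fieldType) (m n : nat) (A : 'M[{poly K}]_(m, n))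
    (J : {set 'I_n}) :
  let rhoA : {set 'I_n} := [set j in pivot_support A] in
  let phi_rhoAJ : {set 'I_n} :=
    [set @phiJ n J i | i in pivot_support (colsJ A J)] in
  rhoA :&: J \subset phi_rhoAJ /\
  (rhoA \subset J -> rhoA :&: J = phi_rhoAJ).
Proof.
move=> rhoA phi_rhoAJ.
have phiJ_mono : forall i i' : 'I_#|J|, (i < i')%N -> (phiJ i < phiJ i')%N.
  exact: enum_val_ltn.
have rhoAP j : j \in rhoA <-> pivot_attained A j by rewrite inE; exact: mem_pivot_support.
have rhoA_sub : rhoA :&: J \subset phi_rhoAJ.
  apply/subsetP => j /setIP[/rhoAP j_att jJ]; rewrite -(enum_rankK_in jJ jJ) in j_att *.
  by apply/imsetP; exists (enum_rank_in jJ j) => //; apply/mem_pivot_support/pivot_attained_colsub.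
split => // rhoA_J; apply/eqP; rewrite eqEsubset rhoA_sub /=.
apply/subsetP => _ /imsetP[i /mem_pivot_support i_att ->].
have attained_J j : pivot_attained A j -> exists i' : 'I_#|J|, phiJ i' = j.
  by move=> /rhoAP/(subsetP rhoA_J) jJ; exists (enum_rank_in jJ j); exact: enum_rankK_in.
apply/setIP; split; last exact: enum_valP.
exact/rhoAP/(colsub_pivot_attained phiJ_mono attained_J).
Qed.
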